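(* Let $\mathbf{A}\in\mathbb{R}^{m\times n}$ with columns $\mathbf{a}_1,\dots,\mathbf{a}_n$, let $\mathbf{y}\in\mathbb{R}^m$, and let $f(\cdot\,;y):\mathbb{R}\to\mathbb{R}$ be, for each $y$, proper, lower semi-continuous, convex and differentiable with $(1/\alpha)$-Lipschitz derivative $f'$ for some $\alpha>0$. Set $F(\mathbf{z};\mathbf{y})=\sum_{i=1}^m f(z_i;y_i)$ for $\mathbf{z}\in\mathbb{R}^m$ and let $\nabla F(\mathbf{z};\mathbf{y})$ denote its gradient with respect to $\mathbf{z}$. Consider the non-negative linear regression problem $$\mathbf{x}^\star\in\arg\min_{\mathbf{x}\in\mathbb{R}^n,\ \mathbf{x}\ge 0}\ \sum_{i=1}^m f([\mathbf{A}\mathbf{x}]_i;y_i)$$ and its dual $$\boldsymbol{\theta}^\star=\arg\max_{\boldsymbol{\theta}\in\mathcal{F}_D}\ -\sum_{i=1}^m f^*(-\theta_i;y_i),\qquad \mathcal{F}_D=\{\boldsymbol{\theta}\in\mathbb{R}^m:\mathbf{A}^T\boldsymbol{\theta}\le 0\},$$ where $f^*(\cdot\,;y)$ is the Fenchel conjugate of $f(\cdot\,;y)$. Assume the interior $\mathrm{Int}(\mathcal{F}_D)$ is nonempty and fix $\mathbf{t}\in\mathrm{Int}(\mathcal{F}_D)$. Define $\Xi_{\mathbf{t}}:\mathbb{R}^m\to\mathbb{R}^m$ by $$\Xi_{\mathbf{t}}(\mathbf{z})=\mathbf{z}+\Big(\max_{j\in[n]}\frac{\max(0,\mathbf{a}_j^T\mathbf{z})}{|\mathbf{a}_j^T\mathbf{t}|}\Big)\mathbf{t},$$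 and $\Theta(\mathbf{x})=\Xi_{\mathbf{t}}(-\nabla F(\mathbf{A}\mathbf{x};\mathbf{y}))$. Then for any primal point $\mathbf{x}\in\mathbb{R}^n_{\ge 0}$ we have $\Theta(\mathbf{x})\in\mathcal{F}_D$. Moreover, $\Theta(\mathbf{x})\to\boldsymbol{\theta}^\star$ as $\mathbf{x}\to\mathbf{x}^\star$.
   Context: $[n]=\{1,\dots,n\}$; vector inequalities are coordinate-wise. $f^*(u;y)=\sup_{z\in\mathbb{R}} zu-f(z;y)$. The dual solution $\boldsymbol{\theta}^\star$ is unique; $\mathbf{x}^\star$ denotes a primal solution. $\mathrm{Int}(\mathcal{F}_D)$ is the topological interior of $\mathcal{F}_D$ in $\mathbb{R}^m$. *)

From HB Require Import structures.
From mathcomp Require Import all_boot all_order all_algebra.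
From mathcomp Require Import all_classical all_reals all_analysis.
Set Implicit Arguments. Unset Strict Implicit. Unset Printing Implicit Defensive.
Import Order.TTheory GRing.Theory Num.Theory.
Import numFieldNormedType.Exports.
Local Open Scope classical_set_scope.
Local Open Scope ring_scope.

Section Defs.
Variable R : realType.

Definition convex_fun (g : R -> R) : Prop :=
  forall a b (l : R), 0 <= l <= 1 ->
    g (l * a + (1 - l) * b) <= l * g a + (1 - l) * g b.

Definition loss_assumptions (f : R -> R -> R) (alpha : R) : Prop :=
  0 < alpha /\
  forall y : R,
    convex_fun (fun z => f z y) /\
    (forall z, derivable (fun z => f z y) z 1) /\
    (forall z1 z2, `| derive1 (fun z => f z y) z1 - derive1 (fun z => f z y) z2 |
                     <= alpha^-1 * `|z1 - z2|).

Definition fconj (f : R -> R -> R) (u y : R) : \bar R :=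
  ereal_sup [set ((z * u - f z y)%:E) | z in setT].

Definition Fsum (m : nat) (f : R -> R -> R) (y : 'cV[R]_m) (z : 'cV[R]_m) : R :=
  \sum_(i < m) f (z i 0) (y i 0).

Definition gradF (m : nat) (f : R -> R -> R) (y : 'cV[R]_m) (z : 'cV[R]_m)
  : 'cV[R]_m :=
  \col_(i < m) derive (Fsum f y) z (delta_mx i 0 : 'cV[R]_m).

Definition nonneg_vec (k : nat) (x : 'cV[R]_k) : Prop := forall i, 0 <= x i 0.
Definition nonpos_vec (k : nat) (x : 'cV[R]_k) : Prop := forall i, x i 0 <= 0.

Definition primal_obj (m n : nat) (f : R -> R -> R) (A : 'M[R]_(m, n))
  (y : 'cV[R]_m) (x : 'cV[R]_n) : R := Fsum f y (A *m x).

Definition dual_obj (m : nat) (f : R -> R -> R) (y : 'cV[R]_m)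
  (theta : 'cV[R]_m) : \bar R :=
  (- \sum_(i < m) fconj f (- theta i 0%R)%R (y i 0%R))%E.

Definition dual_feasible (m n : nat) (A : 'M[R]_(m, n)) : set 'cV[R]_m :=
  [set theta | nonpos_vec (A^T *m theta)].

(* Xi_t(z) = z + (max_j max(0, a_j^T z) / |a_j^T t|) t ; a_j^T z = (A^T z)_j *)
Definition Xi (m n : nat) (A : 'M[R]_(m, n)) (t z : 'cV[R]_m) : 'cV[R]_m :=
  z + (\big[Num.max/0]_(j < n)
         (Num.max 0 ((A^T *m z) j 0) / `|(A^T *m t) j 0|)) *: t.

Definition Theta (m n : nat) (f : R -> R -> R) (A : 'M[R]_(m, n))
  (y t : 'cV[R]_m) (x : 'cV[R]_n) : 'cV[R]_m :=
  Xi A t (- gradF f y (A *m x)).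

End Defs.

From HB Require Import structures.
From mathcomp Require Import all_boot all_order all_algebra.
From mathcomp Require Import all_classical all_reals all_analysis.
From mathcomp Require Import ring lra.
Import Order.TTheory GRing.Theory Num.Theory.
Import numFieldNormedType.Exports.
Local Open Scope classical_set_scope.
Local Open Scope ring_scope.

(* Feasibility: a_j^T Xi_t(z) = a_j^T z + c a_j^T t with c |a_j^T t| >= max(0, a_j^T z),
   and an interior point t has a_j^T t < 0 unless the column a_j vanishes.
   Convergence: by the KKT conditions of the primal problem, g := -grad F(A xstar)
   is dual feasible and complementary to xstar.  Since f' is (1/alpha)-Lipschitz,
   f^*(u) >= z u - f(z) + alpha/4 (u - f'(z))^2, while convexity gives
   f^*(f'(z)) <= z f'(z) - f(z); comparing the dual objectives at thetastar and
   at g therefore forces thetastar = g.  Finally Theta is Lipschitz at xstar: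
   grad F is Lipschitz, and Xi_t moves any point z by at most a constant times
   its distance to a dual feasible point. *)

Section RealLemmas.
Context {R : realType}.

Lemma le_of_forall_sub_mul (r a b c : R) : 0 < r -> 0 <= b ->
  (forall l, 0 < l <= r -> a - l * b <= c) -> a <= c.
Proof.
move=> r0 b0 h; apply/ler_addgt0Pr => e e0.
have b1 : 0 < b + 1 by lra.
set l := Num.min r (e / (b + 1)).
have l0 : 0 < l by rewrite lt_min r0 divr_gt0.
have lb : l * b <= e.
  have : l <= e / (b + 1) by rewrite ge_min lexx orbT.
  by rewrite ler_pdivlMr // => l_le; nra.
have := h l; rewrite l0 ge_min lexx /= => /(_ isT); lra.
Qed.

Lemma quadratic_min_kkt (x g Q : R) : 0 <= x -> 0 <= Q ->
  (forall s, 0 <= x + s -> 0 <= s * g + s ^+ 2 * Q) -> 0 <= g /\ x * g = 0.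
Proof.
move=> x0 Q0 h.
have g0 : 0 <= g.
  apply: (@le_of_forall_sub_mul 1 0 Q) => // l /andP[l0 _].
  have := h l (addr_ge0 x0 (ltW l0)); rewrite expr2 => hl.
  by rewrite -(ler_pM2l l0); lra.
split=> //; have [->|x_neq0] := eqVneq x 0; first by rewrite mul0r.
have x_gt0 : 0 < x by rewrite lt_neqAle eq_sym x_neq0.
suff g_le0 : g <= 0 by rewrite (@le_anti _ _ g 0) ?g_le0 ?mulr0.
apply: (@le_of_forall_sub_mul x g Q 0) => // l /andP[l0 lx].
have := h (- l); rewrite subr_ge0 lx sqrrN expr2 => /(_ isT) hl.
rewrite -(ler_pM2l l0); lra.
Qed.

Lemma cvg_of_dist_le {K : realFieldType} {V W : normedModType K} (g : V -> W)
    x0 l C :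
  (forall x, `|l - g x| <= C * `|x0 - x|) -> g x @[x --> x0] --> l.
Proof.
move=> h; apply/cvgrPdist_le => e e0.
have C1 : 0 < `|C| + 1 by rewrite ltr_wpDl.
near=> x.
have : `|x0 - x| <= e / (`|C| + 1).
  by near: x; exact: (cvgr_dist_le _ _ cvg_id _ (divr_gt0 e0 C1)).
rewrite ler_pdivlMr // => dx; apply: le_trans (h x) _.
by have := ler_norm C; have := normr_ge0 (x0 - x); nra.
Unshelve. all: by end_near.
Qed.

End RealLemmas.

Section Derive1Lipschitz.
Context {R : realType} {g : R -> R} {K : R}.
Hypothesis g_derivable : forall z, derivable g z 1.
Hypothesis derive1_lipschitz :
  forall z1 z2, `|derive1 g z1 - derive1 g z2| <= K * `|z1 - z2|.

Lemma derive1_lipschitz_ge0 : 0 <= K.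
Proof.
by have := derive1_lipschitz 1 0; rewrite subr0 normr1 mulr1; apply: le_trans.
Qed.

Lemma derive1_mvt z w :
  exists2 c, `|c - z| <= `|w - z| & g w - g z = derive1 g c * (w - z).
Proof.
have mvt a b : a < b -> exists2 c, a < c < b & g b - g a = derive1 g c * (b - a).
  move=> ab; have [c] := MVT ab (fun x _ => derivableP (g_derivable x))
    (derivable_within_continuous (fun x _ => g_derivable x)).
  by rewrite in_itv -derive1E; exists c.
have [wz|zw|->] := ltgtP w z; last by exists z; rewrite ?subrr ?mulr0.
- have [c /andP[wc cz] E] := mvt _ _ wz.
  exists c; first by rewrite !ler0_norm ?subr_le0 ?ltW //; lra.
  by rewrite -opprB E -mulrN opprB.
- have [c /andP[zc cw] E] := mvt _ _ zw.
  by exists c => //; rewrite !ger0_norm ?subr_ge0 ?ltW //; lra.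
Qed.

Lemma derive1_taylor_le z h :
  `|g (z + h) - g z - derive1 g z * h| <= K * h ^+ 2.
Proof.
have [c] := derive1_mvt z (z + h); rewrite addrAC subrr add0r => cz ->.
rewrite -mulrBl normrM -real_normK ?num_real // expr2 mulrA.
apply: ler_wpM2r => //; apply: le_trans (derive1_lipschitz c z) _.
by rewrite ler_wpM2l // derive1_lipschitz_ge0.
Qed.

Lemma convex_derive1_tangent_le : convex_fun g ->
  forall z w, g z + derive1 g z * (w - z) <= g w.
Proof.
move=> g_convex z w; rewrite -lerBrDl.
apply: (@le_of_forall_sub_mul _ 1 _ (K * (w - z) ^+ 2)) => // [|l /andP[l0 l1]].
  by rewrite mulr_ge0 ?derive1_lipschitz_ge0 ?sqr_ge0.
have := g_convex w z l; rewrite ltW //= l1 => /(_ isT).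
have -> : l * w + (1 - l) * z = z + l * (w - z) by ring.
move=> convex_ineq.
have := derive1_taylor_le z (l * (w - z)); rewrite ler_norml => /andP[low _].
rewrite -(ler_pM2l l0); move: low convex_ineq; rewrite exprMn; nra.
Qed.

End Derive1Lipschitz.

Section Conjugate.
Context {R : realType} {f : R -> R -> R} {yv K : R}.
Hypothesis f_derivable : forall z, derivable (f^~ yv) z 1.
Hypothesis derive1_lipschitz :
  forall z1 z2, `|derive1 (f^~ yv) z1 - derive1 (f^~ yv) z2| <= K * `|z1 - z2|.

Lemma fconj_derive1_le z : convex_fun (f^~ yv) ->
  (fconj f (derive1 (f^~ yv) z) yv <= (z * derive1 (f^~ yv) z - f z yv)%:E)%E.
Proof.
move=> f_convex; apply: ge_ereal_sup => _ [w _ <-]; rewrite lee_fin.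
by have := convex_derive1_tangent_le f_derivable derive1_lipschitz f_convex z w; lra.
Qed.

Lemma fconj_ge z u : 0 < K ->
  ((z * u - f z yv + (u - derive1 (f^~ yv) z) ^+ 2 / (4 * K))%:E
    <= fconj f u yv)%E.
Proof.
move=> K0; set s := (u - derive1 (f^~ yv) z) / (2 * K).
apply: (@le_trans _ _ (((z + s) * u - f (z + s) yv)%:E)).
  rewrite lee_fin.
  have := derive1_taylor_le f_derivable derive1_lipschitz z s.
  rewrite ler_norml => /andP[_ up].
  have gain : (u - derive1 (f^~ yv) z) * s - K * s ^+ 2 =
      (u - derive1 (f^~ yv) z) ^+ 2 / (4 * K).
    by rewrite /s; field; rewrite gt_eqF.
  lra.
by apply: ereal_sup_ubound; exists (z + s).
Qed.

End Conjugate.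

Section MatrixNorm.
Context {R : realType}.

Lemma mx_norm_ge_entry [p q] (M : 'M[R]_(p, q)) i j : `|M i j| <= `|M|.
Proof.
change (`|M i j| <= mx_norm M); rewrite mx_normrE.
by apply/bigmax_geP; right; exists (i, j).
Qed.

Lemma mx_norm_le [p q] (M : 'M[R]_(p, q)) B :
  0 <= B -> (forall i j, `|M i j| <= B) -> `|M| <= B.
Proof.
move=> B0 h; change (mx_norm M <= B); rewrite mx_normrE.
by apply: bigmax_le => // -[i j] _; apply: h.
Qed.

Lemma mx_norm_mulmx_le [p q r] (M : 'M[R]_(p, q)) (N : 'M[R]_(q, r)) :
  `|M *m N| <= q%:R * `|M| * `|N|.
Proof.
apply: mx_norm_le => [|i k]; first by rewrite !mulr_ge0.
rewrite mxE; apply: le_trans (ler_norm_sum _ _ _) _.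
apply: (@le_trans _ _ (\sum_(j < q) `|M| * `|N|)).
  by apply: ler_sum => j _; rewrite normrM ler_pM ?mx_norm_ge_entry.
by rewrite sumr_const card_ord mulr_natl mulrnAl.
Qed.

Lemma sum_mulmx_tr [m n] (A : 'M[R]_(m, n)) (x : 'cV[R]_n) (w : 'cV[R]_m) :
  \sum_i (A *m x) i 0 * w i 0 = \sum_j x j 0 * (A^T *m w) j 0.
Proof.
under eq_bigr do rewrite mxE mulr_suml.
rewrite exchange_big /=; apply: eq_bigr => j _.
rewrite mxE mulr_sumr; apply: eq_bigr => i _; rewrite mxE; ring.
Qed.

End MatrixNorm.

Section DualFeasible.
Context {R : realType} {m n : nat} {A : 'M[R]_(m, n)}.

Lemma interior_dual_feasible_col0 [t : 'cV[R]_m] [j : 'I_n] :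
  interior (dual_feasible A) t -> (A^T *m t) j 0 = 0 -> forall i, A i j = 0.
Proof.
move=> /nbhs_ballP [r /= r0 ball_feasible] Atj0.
set v : 'cV[R]_m := col j A.
set e := r / (2 * (`|v| + 1)).
have e0 : 0 < e by rewrite divr_gt0 // mulr_gt0 // ltr_wpDl.
have : dual_feasible A (t + e *: v).
  apply: ball_feasible; rewrite -ball_normE /= opprD addNKr normrN normrZ.
  rewrite gtr0_norm // /e mulrAC ltr_pdivrMr ?mulr_gt0 ?ltr_wpDl //.
  by rewrite -subr_gt0 -mulrBr pmulr_rgt0 //; have := normr_ge0 v; lra.
have Atv : (A^T *m v) j 0 = \sum_i A i j ^+ 2.
  by rewrite mxE; apply: eq_bigr => i _; rewrite !mxE expr2.
move=> /(_ j); rewrite mulmxDr -scalemxAr mxE [X in X + _]Atj0 add0r mxE Atv.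
rewrite pmulr_rle0 // => sum_sqr_le0.
have sum_sqr0 : \sum_i A i j ^+ 2 = 0.
  by apply/le_anti; rewrite sum_sqr_le0 sumr_ge0 // => i _; exact: sqr_ge0.
move=> i; apply/eqP; rewrite -sqrf_eq0; apply/eqP.
by apply: (psumr_eq0P _ sum_sqr0) => // k _; exact: sqr_ge0.
Qed.

Lemma Xi_dual_feasible t z :
  interior (dual_feasible A) t -> dual_feasible A (Xi A t z).
Proof.
move=> t_int j; have Atj_le0 : (A^T *m t) j 0 <= 0 by exact: interior_subset t_int j.
rewrite /Xi mulmxDr -scalemxAr mxE [X in _ + X]mxE.
set c := \big[Num.max/0]_(k < n) _.
have [Atj0|Atj_neq0] := eqVneq ((A^T *m t) j 0) 0.
  have col0 := interior_dual_feasible_col0 t_int Atj0.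
  by rewrite Atj0 mulr0 addr0 mxE big1 // => i _; rewrite mxE col0 mul0r.
have Atj_lt0 : (A^T *m t) j 0 < 0 by rewrite lt_neqAle Atj_neq0.
have : Num.max 0 ((A^T *m z) j 0) / `|(A^T *m t) j 0| <= c by exact: le_bigmax.
rewrite (ler0_norm (ltW Atj_lt0)) ler_pdivrMr ?oppr_gt0 // => c_ge.
have : (A^T *m z) j 0 <= Num.max 0 ((A^T *m z) j 0) by rewrite le_max lexx orbT.
lra.
Qed.

Lemma Xi_dist_le t z0 z : dual_feasible A z0 ->
  `|z0 - Xi A t z| <=
    (1 + m%:R * `|A^T| * (\big[Num.max/0]_j `|(A^T *m t) j 0|^-1) * `|t|) * `|z0 - z|.
Proof.
move=> z0_feasible; rewrite /Xi.
set c := \big[Num.max/0]_(j < n) _; set T := \big[Num.max/0]_j _.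
set B := m%:R * `|A^T| * `|z0 - z|.
have c0 : 0 <= c by exact: bigmax_ge_id.
have B0 : 0 <= B by rewrite !mulr_ge0.
have pos_part_le j : Num.max 0 ((A^T *m z) j 0) <= B.
  rewrite ge_max B0 /=; have := mx_norm_mulmx_le A^T (z - z0).
  rewrite distrC -/B => /(le_trans (mx_norm_ge_entry _ j 0)).
  rewrite mulmxBr mxE [X in _ + X]mxE => /(le_trans (ler_norm _)).
  by have := z0_feasible j; lra.
have cT : c <= B * T.
  apply: bigmax_le => [|j _]; first by rewrite mulr_ge0 // bigmax_ge_id.
  apply: ler_pM => //; first by rewrite le_max lexx.
  exact: le_bigmax (fun k => `|(A^T *m t) k 0|^-1) j.
rewrite opprD addrA; apply: le_trans (ler_normB _ _) _.
rewrite normrZ (ger0_norm c0).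
have : c * `|t| <= B * T * `|t| by rewrite ler_wpM2r.
rewrite /B; nra.
Qed.

End DualFeasible.

Section Loss.
Context {R : realType} {m n : nat} {A : 'M[R]_(m, n)} {y : 'cV[R]_m}.
Context {f : R -> R -> R} {alpha : R}.

Lemma gradFE z i : gradF f y z i 0 = derive1 (f^~ (y i 0)) (z i 0).
Proof.
rewrite /gradF mxE /derive /derive1.
suff -> : (fun h : R => h^-1 *: ((Fsum f y \o shift z) (h *: delta_mx i 0) - Fsum f y z))
  = (fun h : R => h^-1 *: (f (h + z i 0) (y i 0) - f (z i 0) (y i 0))) by [].
apply/funext => h /=; congr (_ *: _).
rewrite /Fsum (bigD1 i) //= [X in _ - X](bigD1 i) //= !mxE eqxx mulr1 opprD addrACA
  -sumrB [X in _ + X]big1 ?addr0 // => j /negbTE ji.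
by rewrite !mxE ji mulr0 add0r subrr.
Qed.

Hypothesis loss : loss_assumptions f alpha.

Let alpha_gt0 : 0 < alpha := loss.1.
Let loss_convex yv : convex_fun (f^~ yv) := (loss.2 yv).1.
Let loss_derivable yv : forall z, derivable (f^~ yv) z 1 := (loss.2 yv).2.1.
Let loss_lipschitz yv := (loss.2 yv).2.2.
Let inv_alpha_gt0 : 0 < alpha^-1. Proof. by rewrite invr_gt0. Qed.
Let inv_alpha_ge0 : 0 <= alpha^-1. Proof. exact: ltW. Qed.

Lemma gradF_lipschitz z z' :
  `|gradF f y z - gradF f y z'| <= alpha^-1 * `|z - z'|.
Proof.
apply: mx_norm_le => [|i j]; first by rewrite mulr_ge0.
rewrite (ord1 j) mxE [X in _ + X]mxE !gradFE.
apply: le_trans (loss_lipschitz _ _ _) _; rewrite ler_wpM2l //.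
by have := mx_norm_ge_entry (z - z') i 0; rewrite !mxE.
Qed.

Lemma primal_obj_step_le x j s :
  primal_obj f A y (x + s *: delta_mx j 0) - primal_obj f A y x <=
  s * (A^T *m gradF f y (A *m x)) j 0 + s ^+ 2 * (alpha^-1 * \sum_i A i j ^+ 2).
Proof.
rewrite /primal_obj /Fsum -sumrB mxE !mulr_sumr -big_split /=.
apply: ler_sum => i _.
have Axs : (A *m (x + s *: delta_mx j 0)) i 0 = (A *m x) i 0 + s * A i j.
  by rewrite mulmxDr -scalemxAr -colE mxE; congr (_ + _); rewrite !mxE.
have := derive1_taylor_le (loss_derivable (y i 0)) (loss_lipschitz (y i 0))
  ((A *m x) i 0) (s * A i j).
by rewrite Axs ler_norml gradFE [A^T j i]mxE => /andP[_ up]; lra.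
Qed.

Lemma Theta_dist_le t x0 x : dual_feasible A (- gradF f y (A *m x0)) ->
  `|- gradF f y (A *m x0) - Theta f A y t x| <=
    (1 + m%:R * `|A^T| * (\big[Num.max/0]_j `|(A^T *m t) j 0|^-1) * `|t|) *
    (alpha^-1 * (n%:R * `|A|)) * `|x0 - x|.
Proof.
move=> feasible; apply: le_trans (Xi_dist_le t _ _ feasible) _.
rewrite -[leRHS]mulrA; apply: ler_wpM2l.
  by rewrite addr_ge0 // !mulr_ge0 // bigmax_ge_id.
rewrite opprK addrC; apply: le_trans (gradF_lipschitz _ _) _.
rewrite -[leRHS]mulrA; apply: ler_wpM2l => //.
by rewrite -mulmxBr distrC; exact: mx_norm_mulmx_le.
Qed.

Section PrimalOptimum.
Context {xstar : 'cV[R]_n}.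
Hypothesis xstar_ge0 : nonneg_vec xstar.
Hypothesis xstar_min : forall x : 'cV[R]_n, nonneg_vec x ->
  primal_obj f A y xstar <= primal_obj f A y x.

Lemma primal_opt_kkt j :
  0 <= (A^T *m gradF f y (A *m xstar)) j 0 /\
  xstar j 0 * (A^T *m gradF f y (A *m xstar)) j 0 = 0.
Proof.
apply: (@quadratic_min_kkt _ _ _ (alpha^-1 * \sum_i A i j ^+ 2)) => [//||s xs_ge0].
  by rewrite mulr_ge0 // sumr_ge0 // => i _; exact: sqr_ge0.
have step_ge0 : nonneg_vec (xstar + s *: delta_mx j 0).
  move=> k; rewrite !mxE; have [->|kj] := eqVneq k j; first by rewrite eqxx mulr1.
  by rewrite mulr0 addr0; exact: xstar_ge0.
have := xstar_min _ step_ge0; have := primal_obj_step_le xstar j s; lra.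
Qed.

Lemma dual_feasible_neg_gradF : dual_feasible A (- gradF f y (A *m xstar)).
Proof.
by move=> j; rewrite mulmxN mxE oppr_le0; case: (primal_opt_kkt j).
Qed.

Context {thetastar : 'cV[R]_m}.
Hypothesis thetastar_feasible : dual_feasible A thetastar.
Hypothesis thetastar_max : forall theta, dual_feasible A theta ->
  (dual_obj f y theta <= dual_obj f y thetastar)%E.

Lemma dual_opt_eq_neg_gradF : thetastar = - gradF f y (A *m xstar).
Proof.
set z := A *m xstar; set G := gradF f y z.
pose gap i := (- thetastar i 0 - G i 0) ^+ 2 / (4 * alpha^-1).
have gap_ge0 i : 0 <= gap i by rewrite divr_ge0 ?sqr_ge0 ?mulr_ge0.
have zG0 : \sum_i z i 0 * G i 0 = 0.
  by rewrite sum_mulmx_tr big1 // => j _; case: (primal_opt_kkt j).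
have ztheta_le0 : \sum_i z i 0 * thetastar i 0 <= 0.
  rewrite sum_mulmx_tr -oppr_ge0 -sumrN; apply: sumr_ge0 => j _.
  by rewrite -mulrN mulr_ge0 ?xstar_ge0 // oppr_ge0 thetastar_feasible.
have lower i := fconj_ge (loss_derivable (y i 0)) (loss_lipschitz (y i 0))
  (z i 0) (- thetastar i 0) inv_alpha_gt0.
have upper i := fconj_derive1_le (loss_derivable (y i 0)) (loss_lipschitz (y i 0))
  (z i 0) (loss_convex (y i 0)).
have := thetastar_max _ dual_feasible_neg_gradF; rewrite /dual_obj leeN2 => conj_le.
have : (\sum_i (z i 0 * - thetastar i 0 - f (z i 0) (y i 0) + gap i)%:E <=
        \sum_i (z i 0 * G i 0 - f (z i 0) (y i 0))%:E)%E.
  apply: le_trans (le_trans _ conj_le) _; apply: lee_sum => i _.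
    by rewrite /gap /G gradFE; exact: lower.
  by rewrite mxE opprK /G gradFE; exact: upper.
rewrite !sumEFin lee_fin big_split /= !sumrB zG0.
have -> : \sum_i z i 0 * - thetastar i 0 = - \sum_i z i 0 * thetastar i 0.
  by rewrite -sumrN; apply: eq_bigr => i _; rewrite mulrN.
move=> sum_le; have sum_gap_le0 : \sum_i gap i <= 0 by lra.
have gap0 i : gap i = 0.
  apply: (@psumr_eq0P _ _ xpredT _ (fun k _ => gap_ge0 k)) => //.
  by apply/le_anti; rewrite sum_gap_le0 sumr_ge0.
apply/matrixP => i j; rewrite (ord1 j) mxE; apply/eqP.
have denom_neq0 : 4 * alpha^-1 != 0 by rewrite gt_eqF // mulr_gt0.
move/eqP: (gap0 i); rewrite mulf_eq0 invr_eq0 (negbTE denom_neq0) orbF.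
by rewrite sqrf_eq0 subr_eq0 eqr_oppLR.
Qed.

End PrimalOptimum.

End Loss.

Theorem proposition1 (R : realType) (m n : nat) (A : 'M[R]_(m, n))
  (y : 'cV[R]_m) (f : R -> R -> R) (alpha : R)
  (xstar : 'cV[R]_n) (thetastar : 'cV[R]_m) (t : 'cV[R]_m) :
  loss_assumptions f alpha ->
  (* x* is a primal solution *)
  nonneg_vec xstar ->
  (forall x : 'cV[R]_n, nonneg_vec x ->
     primal_obj f A y xstar <= primal_obj f A y x) ->
  (* theta* is the dual solution *)
  dual_feasible A thetastar ->
  (forall theta, dual_feasible A theta ->
     (dual_obj f y theta <= dual_obj f y thetastar)%E) ->
  (* t in Int(F_D) *)
  interior (dual_feasible A) t ->
  (forall x : 'cV[R]_n, nonneg_vec x -> dual_feasible A (Theta f A y t x)) /\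
  (Theta f A y t @ within [set x : 'cV[R]_n | nonneg_vec x] (nbhs xstar)
     --> thetastar).
Proof.
move=> loss xstar_ge0 xstar_min thetastar_feasible thetastar_max t_int.
split=> [x _|]; first exact: Xi_dual_feasible.
have thetastarE := dual_opt_eq_neg_gradF loss xstar_ge0 xstar_min
  thetastar_feasible thetastar_max.
apply: cvg_within_filter; apply: cvg_of_dist_le => x.
by rewrite thetastarE; apply: (Theta_dist_le loss); rewrite -thetastarE.
Qed.
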